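(* Let $\theta=(k_r)$ be a lacunary sequence, $m\ge0$ an integer, $p>0$ and $0<\beta\le1$. If $\limsup_r\frac{k_r}{k_{r-1}^\beta}<\infty$, then $N_\theta(p,F,\Delta^m)\subseteq w_p^\beta(F,\Delta^m)$.
   Context: A fuzzy number is a map $X:\mathbb{R}\to[0,1]$ which is normal, fuzzy convex, upper semicontinuous, with compact closure of $\{t:X(t)>0\}$; $L(\mathbb{R})$ is the set of fuzzy numbers. Level sets $[X]^\alpha=\{t:X(t)\ge\alpha\}$ ($\alpha\in(0,1]$), $[X]^0=\overline{\{t:X(t)>0\}}$, are compact intervals $[u^\alpha,v^\alpha]$. Subtraction: $[X-Y]^\alpha=[u_1^\alpha-v_2^\alpha,v_1^\alpha-u_2^\alpha]$. Metric: $d(X,Y)=\sup_{\alpha\in[0,1]}\max\{|u_1^\alpha-u_2^\alpha|,|v_1^\alpha-v_2^\alpha|\}$. $(\Delta^0X)_k=X_k$, $(\Delta^1X)_k=X_k-X_{k+1}$, $(\Delta^mX)_k=(\Delta^1(\Delta^{m-1}X))_k$. A lacunary sequence is an increasing integer sequence $\theta=(k_r)_{r\ge0}$ with $k_0=0$, $h_r=k_r-k_{r-1}\to\infty$; $I_r=(k_{r-1},k_r]$. $N_\theta(p,F,\Delta^m)$: sequences $X$ of fuzzy numbers with some $X_0\in L(\mathbb{R})$ such that $\lim_r\frac{1}{h_r}\sum_{k\in I_r}d(\Delta^mX_k,X_0)^p=0$. $w_p^\beta(F,\Delta^m)$: sequences $X$ with some $X_0\in L(\mathbb{R})$ such that $\lim_{n\to\infty}\frac{1}{n^\beta}\sum_{k=1}^n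 d(\Delta^mX_k,X_0)^p=0$. *)

From HB Require Import structures.
From mathcomp Require Import all_boot all_order all_algebra.
From mathcomp Require Import all_classical all_reals all_analysis.
Set Implicit Arguments. Unset Strict Implicit. Unset Printing Implicit Defensive.
Import Order.TTheory GRing.Theory Num.Theory.
Import numFieldNormedType.Exports.
Local Open Scope classical_set_scope.
Local Open Scope ring_scope.

Section Fuzzy.
Variable R : realType.

Definition fuzzy_number (X : R -> R) : Prop :=
  [/\ (forall t, 0 <= X t <= 1),
      (exists t, X t = 1),
      (forall s t l, 0 <= l <= 1 ->
          Num.min (X s) (X t) <= X (l * s + (1 - l) * t)),
      (forall t (e : R), 0 < e -> \forall s \near t, X s < X t + e) &
      compact (closure [set t | 0 < X t])].

Definition level (X : R -> R) (a : R) : set R :=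
  if a == 0 then closure [set t | 0 < X t] else [set t | a <= X t].

Definition lo (X : R -> R) (a : R) : R := inf (level X a).
Definition hi (X : R -> R) (a : R) : R := sup (level X a).

(* Subtraction: the fuzzy number whose a-level sets are
   [lo X a - hi Y a, hi X a - lo Y a]; its membership function is
   recovered from the level sets as t |-> sup {a in (0,1] | t in [X-Y]^a}
   (0 if there is no such a). *)
Definition fsub (X Y : R -> R) : R -> R := fun t =>
  sup [set a | 0 < a <= 1 /\ lo X a - hi Y a <= t <= hi X a - lo Y a].

Definition fdist (X Y : R -> R) : R :=
  sup [set x | exists2 a, 0 <= a <= 1 &
        x = Num.max `|lo X a - lo Y a| `|hi X a - hi Y a|].

Fixpoint fdelta (m : nat) (X : nat -> R -> R) : nat -> R -> R :=
  match m with
  | 0 => X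
  | m'.+1 => fun k => fsub (fdelta m' X k) (fdelta m' X k.+1)
  end.

End Fuzzy.

Definition hlac (theta : nat -> nat) (r : nat) : nat := (theta r - theta r.-1)%N.

Definition lacunary (theta : nat -> nat) : Prop :=
  [/\ theta 0 = 0%N, (forall r, (theta r < theta r.+1)%N) &
      (hlac theta) @ \oo --> \oo].

(* N_theta(p,F,Delta^m); the sum is over k in I_r = (k_{r-1}, k_r] *)
Definition N_theta (R : realType) (theta : nat -> nat) (p : R) (m : nat)
    (X : nat -> R -> R) : Prop :=
  exists X0 : R -> R, fuzzy_number X0 /\
    (fun r => (hlac theta r)%:R^-1 *
       \sum_((theta r.-1).+1 <= k < (theta r).+1)
          fdist (fdelta m X k) X0 `^ p) @ \oo --> (0 : R).

Definition w_beta (R : realType) (beta p : R) (m : nat)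
    (X : nat -> R -> R) : Prop :=
  exists X0 : R -> R, fuzzy_number X0 /\
    (fun n : nat => (n%:R `^ beta)^-1 *
       \sum_(1 <= k < n.+1) fdist (fdelta m X k) X0 `^ p) @ \oo --> (0 : R).

From HB Require Import structures.
From mathcomp Require Import all_boot all_order all_algebra.
From mathcomp Require Import all_classical all_reals all_analysis.
From mathcomp Require Import lra.
Set Implicit Arguments. Unset Strict Implicit. Unset Printing Implicit Defensive.
Import Order.TTheory GRing.Theory Num.Theory.
Import numFieldNormedType.Exports.
Local Open Scope classical_set_scope.
Local Open Scope ring_scope.

(** Only the nonnegative terms [a k = d(Δ^m X_k, X_0)^p] matter.  With
    [S n = a_1 + ... + a_n], summing the lacunary block averages shows
    [S (k_r) = o(k_r)].  For [k_{r-1} < n <= k_r] we then get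
    [S n / n^β <= S (k_r) / k_{r-1}^β = (S (k_r) / k_r) (k_r / k_{r-1}^β)],
    and the second factor is eventually bounded by hypothesis. *)

Section LacunaryPartialSums.
Variable theta : nat -> nat.
Hypothesis theta0 : theta 0 = 0%N.
Hypothesis theta_ltS : forall r, (theta r < theta r.+1)%N.

Lemma theta_mono : {mono theta : r s / (r <= s)%N}.
Proof. exact: leq_mono (homo_ltn ltn_trans theta_ltS). Qed.

Lemma leq_theta r : (r <= theta r)%N.
Proof. by elim: r => // r IH; apply: leq_ltn_trans IH (theta_ltS r). Qed.

Lemma theta_bracket n : (0 < n)%N ->
  exists2 r, (0 < r)%N & (theta r.-1 < n <= theta r)%N.
Proof.
move=> n_gt0; have ex_r : exists r, (n <= theta r)%N by exists n; apply: leq_theta.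
case: (ex_minnP ex_r) => -[|r]; first by rewrite theta0 leqNgt n_gt0.
move=> n_le min_r; exists r.+1 => //=; rewrite n_le andbT ltnNge.
by apply/negP => /min_r; rewrite ltnn.
Qed.

Variables (R : realType) (a : nat -> R).
Hypothesis a_ge0 : forall k, 0 <= a k.

Definition psum n := \sum_(1 <= k < n.+1) a k.

Definition block_sum r := \sum_((theta r.-1).+1 <= k < (theta r).+1) a k.

Lemma psum_ge0 n : 0 <= psum n.
Proof. exact: sumr_ge0. Qed.

Lemma le_psum : {homo psum : n N / (n <= N)%N >-> n <= N}.
Proof.
move=> n N nN; rewrite /psum [leRHS](big_cat_nat _ (n := n.+1)) //=.
by rewrite lerDl sumr_ge0.
Qed.

Lemma psum_thetaS r : psum (theta r.+1) = psum (theta r) + block_sum r.+1.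
Proof. by rewrite /psum [LHS](big_cat_nat _ (n := (theta r).+1)) // ltnS ltnW. Qed.

Lemma psum_theta_le_slope J c :
    (forall r, (J < r)%N -> block_sum r <= c * (hlac theta r)%:R) ->
  forall r, (J <= r)%N ->
    psum (theta r) <= psum (theta J) + c * ((theta r)%:R - (theta J)%:R).
Proof.
move=> block_le; elim=> [|r IH]; first by rewrite leqn0 => /eqP->; lra.
rewrite leq_eqVlt => /orP[/eqP<-|]; first lra.
rewrite ltnS => Jr; rewrite psum_thetaS.
have hS : (hlac theta r.+1)%:R = (theta r.+1)%:R - (theta r)%:R :> R.
  by rewrite /hlac natrB // ltnW.
have := block_le r.+1 Jr; rewrite hS.
have := IH Jr; lra.
Qed.

Lemma psum_theta_small d : 0 < d ->
    (fun r => (hlac theta r)%:R^-1 * block_sum r) @ \oo --> (0 : R) ->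
  \forall r \near \oo, psum (theta r) <= d * (theta r)%:R.
Proof.
move=> d_gt0; have d2_gt0 : 0 < d / 2 by rewrite divr_gt0.
move=> /cvgrPdist_lt /(_ _ d2_gt0) [J _ avg_small].
have block_le r : (J < r)%N -> block_sum r <= d / 2 * (hlac theta r)%:R.
  case: r => // r /ltnW/avg_small; rewrite /= sub0r normrN ger0_norm; last first.
    by rewrite mulr_ge0 ?sumr_ge0.
  have h_gt0 : (0 < hlac theta r.+1)%N by rewrite /hlac subn_gt0 theta_ltS.
  by rewrite mulrC ltr_pdivrMr ?ltr0n // => /ltW.
exists (maxn J (Num.truncn (psum (theta J) / (d / 2))).+1) => // r.
rewrite /= geq_max => /andP[Jr big_r].
have := psum_theta_le_slope block_le Jr.
have : psum (theta J) <= d / 2 * (theta r)%:R.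
  rewrite mulrC -ler_pdivrMr //.
  apply: le_trans (ltW (truncnS_gt _)) _.
  by rewrite ler_nat (leq_trans big_r) ?leq_theta.
have := mulr_ge0 (ltW d2_gt0) (ler0n R (theta J)).
lra.
Qed.

Lemma psum_powR_cvg0 (beta M : R) : 0 < beta ->
    (\forall r \near \oo, (theta r)%:R / ((theta r.-1)%:R `^ beta) <= M) ->
    (fun r => (hlac theta r)%:R^-1 * block_sum r) @ \oo --> (0 : R) ->
  (fun n : nat => (n%:R `^ beta)^-1 * psum n) @ \oo --> (0 : R).
Proof.
move=> beta_gt0 [R2 _ ratio_le] avg_cvg; apply/cvgrPdist_lt => e e_gt0.
set K := `|M| + 1; have K_gt0 : 0 < K by rewrite ltr_wpDl.
have eK_gt0 : 0 < e / (2 * K) by rewrite divr_gt0 // mulr_gt0.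
have [R1 _ psum_small] := psum_theta_small eK_gt0 avg_cvg.
set R0 := maxn (maxn R1 R2) 1.
exists (theta R0).+1 => // n R0n; rewrite /= sub0r normrN.
have [r r_gt0 /andP[lt_n le_n]] := theta_bracket (leq_trans (ltn0Sn _) R0n).
have R0r : (R0 < r)%N by rewrite -(leqW_mono theta_mono) (leq_trans R0n le_n).
move: R0r; rewrite !gtn_max => /andP[/andP[R1r R2r] r_gt1].
have Pr_gt0 : 0 < (theta r.-1)%:R `^ beta.
  by rewrite powR_gt0 // ltr0n (leq_trans _ (leq_theta _)) // -ltnS prednK.
have Pr_le : (theta r.-1)%:R `^ beta <= n%:R `^ beta.
  by apply: ge0_ler_powR; rewrite ?nnegrE ?ler_nat ?(ltnW lt_n) ?(ltW beta_gt0).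
have theta_le : (theta r)%:R <= K * (theta r.-1)%:R `^ beta.
  have := ratio_le r (ltnW R2r); rewrite ler_pdivrMr // => /le_trans; apply.
  by rewrite ler_pM2r // /K; have := ler_norm M; lra.
have psum_le : psum n <= e / 2 * n%:R `^ beta.
  have <- : e / (2 * K) * K = e / 2 by rewrite invfM mulrA mulfVK ?gt_eqF.
  apply: le_trans (le_psum le_n) _; apply: le_trans (psum_small r (ltnW R1r)) _.
  rewrite -[in leRHS]mulrA ler_pM2l //; apply: le_trans theta_le _.
  by rewrite ler_pM2l.
rewrite ger0_norm ?mulr_ge0 ?psum_ge0 ?invr_ge0 ?powR_ge0 //.
rewrite mulrC ltr_pdivrMr ?(lt_le_trans Pr_gt0) //.
apply: le_lt_trans psum_le _; rewrite ltr_pM2r ?(lt_le_trans Pr_gt0) //; lra.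
Qed.

End LacunaryPartialSums.

Theorem theorem2p15 (R : realType) (theta : nat -> nat) (m : nat) (p beta : R)
    (X : nat -> R -> R) :
  lacunary theta -> 0 < p -> 0 < beta <= 1 ->
  (exists M : R, \forall r \near \oo,
      (theta r)%:R / ((theta r.-1)%:R `^ beta) <= M) ->
  (forall k, fuzzy_number (X k)) ->
  N_theta theta p m X -> w_beta beta p m X.
Proof.
move=> [theta0 theta_ltS _] _ /andP[beta_gt0 _] [M ratio_le] _ [X0 [X0_fuzzy avg_cvg]].
exists X0; split => //.
exact: (psum_powR_cvg0 theta0 theta_ltS (fun k => powR_ge0 _ _) beta_gt0 ratio_le avg_cvg).
Qed.
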